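(* Let \[K_2=\langle x,t \mid [x,\ txt^{-1}\,x\,tx^{-1}t^{-1}],\ t^2\rangle.\] Then the subgroup $\langle x, txt^{-1}\rangle$ of $K_2$ is isomorphic to the (integral) Heisenberg group $\langle a,b\mid [a,[a,b]],[b,[a,b]]\rangle$, and it has index $2$ in $K_2$ with transversal $\{1,t\}$.
   Context: Commutator convention: $[u,v]=uvu^{-1}v^{-1}$; a relator $r$ in a presentation means $r=1$. *)

Record group := Group {
  carrier :> Type;
  mul : carrier -> carrier -> carrier;
  one : carrier;
  inv : carrier -> carrier;
  mulA : forall x y z, mul x (mul y z) = mul (mul x y) z;
  mul1g : forall x, mul one x = x;
  mulVg : forall x, mul (inv x) x = one
}.
Arguments mul {g} _ _.
Arguments one {g}.
Arguments inv {g} _.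

Definition comm {G : group} (u v : G) : G :=
  mul (mul (mul u v) (inv u)) (inv v).

Definition is_hom {G H : group} (f : G -> H) : Prop :=
  forall u v : G, f (mul u v) = mul (f u) (f v).

Inductive gen {G : group} (S : G -> Prop) : G -> Prop :=
| gen_base : forall g, S g -> gen S g
| gen_one : gen S one
| gen_mul : forall u v, gen S u -> gen S v -> gen S (mul u v)
| gen_inv : forall u, gen S u -> gen S (inv u).

Definition relations2 := forall H : group, H -> H -> Prop.

(* (G, a, b) is a presentation <a, b | rels>: G is generated by a, b, the
   relations hold, and G has the universal property of the presented group. *)
Definition presents2 (rels : relations2) (G : group) (a b : G) : Prop :=
  (forall g : G, gen (fun y => y = a \/ y = b) g) /\
  rels G a b /\
  (forall (H : group) (a' b' : H), rels H a' b' ->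
     exists f : G -> H, is_hom f /\ f a = a' /\ f b = b').

Definition K2_rels : relations2 := fun H x t =>
  comm x (mul (mul (mul (mul (mul (mul t x) (inv t)) x) t) (inv x)) (inv t)) = one
  /\ mul t t = one.

Definition Heis_rels : relations2 := fun H a b =>
  comm a (comm a b) = one /\ comm b (comm a b) = one.

(* Write y = t x t^-1.  Since t^2 = 1, conjugation by t swaps x and y, so
   the defining relation of K_2, which says that x commutes with y x y^-1,
   also gives that y commutes with x y x^-1; these two statements are the
   Heisenberg relations for the pair (x, y).  The resulting map from the
   Heisenberg group H onto <x, y> is injective because the K_2 relations
   hold in the semidirect product H x| Z/2, where Z/2 acts by swapping the
   two generators of H: the induced map K_2 -> H x| Z/2 is a left inverse.
   Finally <x, y> is normalised by t, hence <x, y> and <x, y> t cover K_2,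
   and t is not in <x, y> because the map K_2 -> Z/2 sending x to 0 and t
   to 1 kills <x, y>. *)

From Stdlib Require Import Bool Setoid.

Infix "**" := mul (at level 40, left associativity).

Definition conjg {G : group} (t u : G) : G := t ** u ** inv t.

Definition commute {G : group} (u v : G) : Prop := u ** v = v ** u.

Section GroupFacts.

Variable G : group.
Implicit Types t u v w : G.

Lemma mulgV u : u ** inv u = one.
Proof.
  rewrite <- (mul1g G (u ** inv u)), <- (mulVg G (inv u)) at 1.
  rewrite <- (mulA G (inv (inv u))), (mulA G (inv u) u), mulVg, mul1g, mulVg.
  reflexivity.
Qed.

Lemma mulg1 u : u ** one = u.
Proof. rewrite <- (mulVg G u), mulA, mulgV, mul1g. reflexivity. Qed.

Lemma mulKg u v : inv u ** (u ** v) = v.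
Proof. rewrite mulA, mulVg, mul1g. reflexivity. Qed.

Lemma mulKVg u v : u ** (inv u ** v) = v.
Proof. rewrite mulA, mulgV, mul1g. reflexivity. Qed.

Lemma mulgK u v : u ** v ** inv v = u.
Proof. rewrite <- mulA, mulgV, mulg1. reflexivity. Qed.

Lemma mulgKV u v : u ** inv v ** v = u.
Proof. rewrite <- mulA, mulVg, mulg1. reflexivity. Qed.

Lemma mulgI u v w : u ** v = u ** w -> v = w.
Proof. intro E. rewrite <- (mulKg u v), E, mulKg. reflexivity. Qed.

Lemma inv_unique u v : u ** v = one -> inv u = v.
Proof. intro E. rewrite <- (mulg1 (inv u)), <- E, mulKg. reflexivity. Qed.

Lemma invK u : inv (inv u) = u.
Proof. apply inv_unique, mulVg. Qed.

Lemma invM u v : inv (u ** v) = inv v ** inv u.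
Proof. apply inv_unique. rewrite mulA, mulgK, mulgV. reflexivity. Qed.

Lemma inv1 : inv (@one G) = one.
Proof. apply inv_unique, mul1g. Qed.

Lemma comm_eq1 u v : comm u v = one <-> commute u v.
Proof.
  unfold comm, commute. split; intro E.
  - assert (Conj : u ** v ** inv u = v).
    { rewrite <- (mulgKV (u ** v ** inv u) v), E, mul1g. reflexivity. }
    rewrite <- Conj at 2. rewrite mulgKV. reflexivity.
  - rewrite E, mulgK, mulgV. reflexivity.
Qed.

Lemma commuteV u v : commute u v -> commute u (inv v).
Proof.
  unfold commute. intro E. apply (mulgI v).
  rewrite mulKVg, mulA, <- E, mulgK. reflexivity.
Qed.

Lemma commuteV_iff u v : commute u (inv v) <-> commute u v.
Proof.
  split; [rewrite <- (invK v) at 2 |]; apply commuteV.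
Qed.

Lemma commuteMl u v : commute u (u ** v) <-> commute u v.
Proof.
  unfold commute. split; intro E.
  - apply (mulgI u). rewrite E, mulA. reflexivity.
  - rewrite <- (mulA G u v u), E. reflexivity.
Qed.

Lemma commuteMVr u v : commute u (v ** inv u) <-> commute u v.
Proof.
  rewrite <- commuteV_iff, invM, invK, commuteMl, commuteV_iff. reflexivity.
Qed.

Lemma conjgV t u : inv (conjg t u) = conjg t (inv u).
Proof. unfold conjg. rewrite !invM, invK, mulA. reflexivity. Qed.

Lemma conjg_hom t : is_hom (conjg t).
Proof. intros u v. unfold conjg. rewrite !mulA, mulgKV. reflexivity. Qed.

Lemma conjg_invol t u : t ** t = one -> conjg t (conjg t u) = u.
Proof.
  intro Ht. assert (Vt : inv t = t) by (apply inv_unique, Ht).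
  unfold conjg. rewrite Vt, !mulA, Ht, mul1g, <- mulA, Ht, mulg1. reflexivity.
Qed.

(* [x,y] = x (y x y^-1)^-1 = (x y x^-1) y^-1, so the two Heisenberg
   relations are commutation relations with conjugates. *)
Lemma commute_comm_l u v : commute u (comm u v) <-> commute u (conjg v u).
Proof.
  replace (comm u v) with (u ** inv (conjg v u))
    by (rewrite conjgV; unfold comm, conjg; rewrite !mulA; reflexivity).
  rewrite commuteMl, commuteV_iff. reflexivity.
Qed.

Lemma commute_comm_r u v : commute v (comm u v) <-> commute v (conjg u v).
Proof. apply commuteMVr. Qed.

End GroupFacts.

Section Homomorphisms.

Variables G H : group.
Variable f : G -> H.
Hypothesis f_hom : is_hom f.

Lemma hom_one : f one = one.
Proof. apply (mulgI H (f one)). rewrite <- f_hom, !mulg1. reflexivity. Qed.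

Lemma hom_inv u : f (inv u) = inv (f u).
Proof. symmetry. apply inv_unique. rewrite <- f_hom, mulgV. apply hom_one. Qed.

Lemma hom_conjg t u : f (conjg t u) = conjg (f t) (f u).
Proof. unfold conjg. rewrite !f_hom, hom_inv. reflexivity. Qed.

Lemma hom_commute u v : commute u v -> commute (f u) (f v).
Proof. unfold commute. intro E. rewrite <- !f_hom, E. reflexivity. Qed.

Lemma hom_gen_sub (S : G -> Prop) (T : H -> Prop) :
  (forall s, S s -> gen T (f s)) -> forall w, gen S w -> gen T (f w).
Proof.
  intros fS w Sw. induction Sw as [s Ss | | u v _ IHu _ IHv | u _ IH].
  - apply fS, Ss.
  - rewrite hom_one. apply gen_one.
  - rewrite f_hom. apply gen_mul; assumption.
  - rewrite hom_inv. apply gen_inv, IH.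
Qed.

Lemma gen_sub_range (T : H -> Prop) :
  (forall s, T s -> exists u, f u = s) ->
  forall w, gen T w -> exists u, f u = w.
Proof.
  intros fT w Tw.
  induction Tw as [s Ts | | v w _ [u Eu] _ [u' Eu'] | v _ [u Eu]].
  - apply fT, Ts.
  - exists one. apply hom_one.
  - exists (u ** u'). rewrite f_hom, Eu, Eu'. reflexivity.
  - exists (inv u). rewrite hom_inv, Eu. reflexivity.
Qed.

End Homomorphisms.

Arguments hom_one {G H f}.
Arguments hom_inv {G H f}.
Arguments hom_conjg {G H f}.
Arguments hom_commute {G H f}.
Arguments hom_gen_sub {G H f}.
Arguments gen_sub_range {G H f}.

Lemma hom_eq_on_gen (G H : group) (f f' : G -> H) (S : G -> Prop) :
  is_hom f -> is_hom f' ->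
  (forall s, S s -> f s = f' s) -> forall w, gen S w -> f w = f' w.
Proof.
  intros f_hom f'_hom E w Sw.
  induction Sw as [s Ss | | u v _ IHu _ IHv | u _ IH].
  - apply E, Ss.
  - rewrite (hom_one f_hom), (hom_one f'_hom). reflexivity.
  - rewrite f_hom, f'_hom, IHu, IHv. reflexivity.
  - rewrite (hom_inv f_hom), (hom_inv f'_hom), IH. reflexivity.
Qed.

Lemma K2_relsE (G : group) (x t : G) :
  K2_rels G x t <-> commute x (conjg (conjg t x) x) /\ t ** t = one.
Proof.
  unfold K2_rels. rewrite comm_eq1.
  replace (t ** x ** inv t ** x ** t ** inv x ** inv t)
    with (conjg (conjg t x) x)
    by (unfold conjg at 1; rewrite conjgV; unfold conjg; rewrite !mulA;
        reflexivity).
  reflexivity.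
Qed.

Lemma K2_rels_Heis (G : group) (x t : G) :
  K2_rels G x t -> Heis_rels G x (conjg t x).
Proof.
  rewrite K2_relsE. intros [Cx Ht].
  assert (Cy : commute (conjg t x) (conjg x (conjg t x))).
  { pose proof (hom_commute (conjg_hom G t) _ _ Cx) as C.
    rewrite (hom_conjg (conjg_hom G t)), (conjg_invol G t x Ht) in C. exact C. }
  split; apply comm_eq1;
    [apply commute_comm_l, Cx | apply commute_comm_r, Cy].
Qed.

Lemma Heis_rels_sym (G : group) (a b : G) : Heis_rels G a b -> Heis_rels G b a.
Proof.
  assert (E : comm b a = inv (comm a b)).
  { unfold comm. rewrite !invM, !invK, !mulA. reflexivity. }
  intros [Ca Cb]. rewrite comm_eq1 in Ca, Cb.
  split; apply comm_eq1; rewrite E; apply commuteV; assumption.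
Qed.

Section SemidirectByInvolution.

Variable H : group.
Variable sg : H -> H.
Hypothesis sg_hom : is_hom sg.
Hypothesis sg_invol : forall h, sg (sg h) = h.

Definition twist (e : bool) (h : H) : H := if e then sg h else h.

Lemma twistM e u v : twist e (u ** v) = twist e u ** twist e v.
Proof. destruct e; [apply sg_hom | reflexivity]. Qed.

Lemma twist_twist e e' h : twist e (twist e' h) = twist (xorb e e') h.
Proof. destruct e, e'; simpl; rewrite ?sg_invol; reflexivity. Qed.

Lemma twist1 e : twist e one = one.
Proof. destruct e; [apply (hom_one sg_hom) | reflexivity]. Qed.

Definition sdmul (p q : H * bool) : H * bool :=
  (fst p ** twist (snd p) (fst q), xorb (snd p) (snd q)).

Definition sdinv (p : H * bool) : H * bool :=
  (twist (snd p) (inv (fst p)), snd p).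

Lemma sdmulA p q r : sdmul p (sdmul q r) = sdmul (sdmul p q) r.
Proof.
  destruct p as [p e], q as [q e'], r as [r e'']. unfold sdmul; simpl.
  rewrite twistM, twist_twist, mulA, xorb_assoc. reflexivity.
Qed.

Lemma sdmul1 p : sdmul (one, false) p = p.
Proof.
  destruct p as [p e]. unfold sdmul; simpl. rewrite mul1g. reflexivity.
Qed.

Lemma sdmulV p : sdmul (sdinv p) p = (one, false).
Proof.
  destruct p as [p e]. unfold sdmul, sdinv; simpl.
  rewrite <- twistM, mulVg, twist1, xorb_nilpotent. reflexivity.
Qed.

Definition semidir : group :=
  Group (H * bool) sdmul (one, false) sdinv sdmulA sdmul1 sdmulV.

Definition sdincl (h : H) : semidir := (h, false).

Lemma sdincl_hom : is_hom sdincl.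
Proof. intros u v. reflexivity. Qed.

Lemma sdincl_inj u v : sdincl u = sdincl v -> u = v.
Proof. intro E. injection E. trivial. Qed.

Definition sdswap : semidir := (one, true).

Lemma conjg_sdswap h : conjg sdswap (sdincl h) = sdincl (sg h).
Proof.
  unfold conjg, sdincl; simpl. unfold sdmul, sdinv; simpl.
  rewrite sg_invol, inv1, mul1g, mulg1. reflexivity.
Qed.

Lemma semidir_K2_rels a :
  Heis_rels H a (sg a) -> K2_rels semidir (sdincl a) sdswap.
Proof.
  intros [Ca _]. apply K2_relsE. split.
  - rewrite !conjg_sdswap, <- (hom_conjg sdincl_hom).
    apply (hom_commute sdincl_hom), commute_comm_l, comm_eq1, Ca.
  - simpl. unfold sdmul; simpl. rewrite (hom_one sg_hom), mulg1. reflexivity.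
Qed.

End SemidirectByInvolution.

Arguments sdincl {H sg sg_hom sg_invol}.
Arguments sdswap {H sg sg_hom sg_invol}.

Definition Z2 : group :=
  Group bool xorb false (fun e => e)
    (fun e e' e'' => eq_sym (xorb_assoc e e' e'')) xorb_false_l xorb_nilpotent.

Lemma Heis_swap (H : group) (a b : H) : presents2 Heis_rels H a b ->
  exists sg : H -> H,
    is_hom sg /\ sg a = b /\ sg b = a /\ forall h, sg (sg h) = h.
Proof.
  intros [Hgen [Hrel Huniv]].
  destruct (Huniv H b a (Heis_rels_sym H a b Hrel)) as [sg [sg_hom [sga sgb]]].
  exists sg. repeat split; try assumption.
  intro h. apply (hom_eq_on_gen H H (fun h => sg (sg h)) (fun h => h)
                   (fun y => y = a \/ y = b)).
  - intros u v. rewrite !sg_hom. reflexivity.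
  - intros u v. reflexivity.
  - intros s [-> | ->]; [rewrite sga, sgb | rewrite sgb, sga]; reflexivity.
  - apply Hgen.
Qed.

Lemma Heis_embedding (K H : group) (x t : K) (a b : H) :
  presents2 K2_rels K x t -> presents2 Heis_rels H a b ->
  exists f : H -> K, is_hom f /\ f a = x /\ f b = conjg t x /\
    forall u v, f u = f v -> u = v.
Proof.
  intros [_ [Krel Kuniv]] Hpres.
  destruct (Heis_swap H a b Hpres) as [sg [sg_hom [sga [sgb sg_invol]]]].
  destruct Hpres as [Hgen [Hrel Huniv]].
  destruct (Huniv K x (conjg t x) (K2_rels_Heis K x t Krel))
    as [f [f_hom [fa fb]]].
  assert (HP : K2_rels (semidir H sg sg_hom sg_invol) (sdincl a) sdswap).
  { apply semidir_K2_rels. rewrite sga. exact Hrel. }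
  destruct (Kuniv _ _ _ HP) as [g [g_hom [gx gt]]].
  assert (gf : forall h, g (f h) = sdincl h).
  { intro h. apply (hom_eq_on_gen H _ (fun h => g (f h)) sdincl
                   (fun y => y = a \/ y = b)).
    - intros u v. rewrite f_hom, g_hom. reflexivity.
    - apply sdincl_hom.
    - intros s [-> | ->].
      + rewrite fa. exact gx.
      + rewrite fb, (hom_conjg g_hom), gx, gt, conjg_sdswap, sga. reflexivity.
    - apply Hgen. }
  exists f. repeat split; try assumption.
  intros u v E. apply (sdincl_inj H sg sg_hom sg_invol).
  rewrite <- !gf, E. reflexivity.
Qed.

Lemma gen_cosets (G : group) (T : G -> Prop) (x t : G) :
  (forall g, gen (fun y => y = x \/ y = t) g) -> t ** t = one ->
  gen T x -> (forall w, gen T w -> gen T (conjg t w)) ->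
  forall g, gen T g \/ gen T (g ** inv t).
Proof.
  intros Ggen Ht Tx Tconj g.
  assert (Vt : inv t = t) by (apply inv_unique, Ht).
  assert (Tconj' : forall w, gen T w -> gen T (t ** w ** t)).
  { intros w Tw. rewrite <- Vt at 2. apply Tconj, Tw. }
  assert (mulgtt : forall w, w ** t ** t = w).
  { intro w. rewrite <- mulA, Ht, mulg1. reflexivity. }
  rewrite Vt.
  induction (Ggen g)
    as [g [-> | ->] | | u v _ [Tu | Tut] _ [Tv | Tvt] | u _ [Tu | Tut]].
  - left. exact Tx.
  - right. rewrite Ht. apply gen_one.
  - left. apply gen_one.
  - left. apply gen_mul; assumption.
  - right. rewrite <- mulA. apply gen_mul; assumption.
  - right. replace (u ** v ** t) with (u ** t ** (t ** v ** t))
      by (rewrite !mulA, mulgtt; reflexivity).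
    apply gen_mul; [| apply Tconj']; assumption.
  - left. replace (u ** v) with (u ** t ** (t ** (v ** t) ** t))
      by (rewrite !mulA, !mulgtt; reflexivity).
    apply gen_mul; [| apply Tconj']; assumption.
  - left. apply gen_inv, Tu.
  - right. replace (inv u ** t) with (t ** inv (u ** t) ** t)
      by (rewrite invM, Vt, mulA, Ht, mul1g; reflexivity).
    apply Tconj', gen_inv, Tut.
Qed.

Lemma K2_gen_notin_t (K : group) (x t : K) :
  presents2 K2_rels K x t -> ~ gen (fun y => y = x \/ y = conjg t x) t.
Proof.
  intros [_ [_ Kuniv]] St.
  destruct (Kuniv Z2 false true (conj eq_refl eq_refl)) as [g [g_hom [gx gt]]].
  assert (g_gen : g t = false).
  { refine (hom_eq_on_gen K Z2 g (fun _ => one) _ g_hom _ _ t St).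
    - now intros.
    - intros s [-> | ->]; [exact gx |].
      rewrite (hom_conjg g_hom), gx, gt. reflexivity. }
  rewrite g_gen in gt. discriminate.
Qed.

Theorem lemma4p2 :
  forall (K : group) (x t : K), presents2 K2_rels K x t ->
  let S := gen (fun y => y = x \/ y = mul (mul t x) (inv t)) in
  (* S is isomorphic to the Heisenberg group *)
  (forall (Hs : group) (a b : Hs), presents2 Heis_rels Hs a b ->
     exists f : Hs -> K, is_hom f /\
       (forall u v, f u = f v -> u = v) /\
       (forall g, S g <-> exists h, f h = g)) /\
  (* index 2 with transversal {1, t}: K = S u S t and S t <> S *)
  (forall g : K, S g \/ S (mul g (inv t))) /\
  ~ S t.
Proof.
  intros K x t Kpres S.
  pose proof Kpres as [Kgen [[_ Ht] Kuniv]].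
  assert (Sx : S x) by (apply gen_base; left; reflexivity).
  assert (Sy : S (conjg t x)) by (apply gen_base; right; reflexivity).
  split; [| split].
  - intros H a b Hpres.
    destruct (Heis_embedding K H x t a b Kpres Hpres)
      as [f [f_hom [fa [fb f_inj]]]].
    exists f. split; [exact f_hom | split; [exact f_inj |]].
    intro g. split.
    + apply (gen_sub_range f_hom).
      intros s [-> | ->]; [exists a | exists b]; assumption.
    + intros [h <-]. apply (hom_gen_sub f_hom (fun y => y = a \/ y = b)).
      * intros s [-> | ->]; [rewrite fa | rewrite fb]; assumption.
      * apply Hpres.
  - apply (gen_cosets K _ x t Kgen Ht Sx).
    apply (hom_gen_sub (conjg_hom K t)).
    intros s [-> | ->]; [| change (S (conjg t (conjg t x)));
                            rewrite (conjg_invol K t x Ht)]; assumption.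
  - exact (K2_gen_notin_t K x t Kpres).
Qed.
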